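(* Let $\mathcal{S}\subset\overline{\mathbb{M}}$ be a finite set. Then there is an integer $e_0$ such that for all $e\ge e_0$, $$\big|\Delta^{(m-1)}_e(\mathcal{S})\setminus\Delta^{(m-1)}_e(\phi(\mathcal{S}))\big|\le\big|\Delta^{(m)}_e(\phi(\mathcal{S}))\setminus\Delta^{(m)}_e(\mathcal{S})\big|.$$
   Context: $q$ is a prime power, $m$ a positive integer. A monomial $\mu\neq1$ in $x_0,\dots,x_m$ written $x_0^{a_0}\cdots x_k^{a_k}$ with $a_k>0$ is projectively reduced if $a_0,\dots,a_{k-1}\le q-1$; $1$ is projectively reduced. $\overline{\mathbb{M}}$ is the set of projectively reduced monomials, $\overline{\mathbb{M}}_e$ those of degree $e$. $\overline{\mathbb{M}}^{(0)}=\{x_0^a:a\ge0\}$, and for $1\le\ell\le m$, $\overline{\mathbb{M}}^{(\ell)}=\{x_0^{a_0}\cdots x_\ell^{a_\ell}\in\overline{\mathbb{M}}:a_\ell>0\}$; $\overline{\mathbb{M}}^{(\ell)}_e=\overline{\mathbb{M}}^{(\ell)}\cap\overline{\mathbb{M}}_e$. For a set $\mathcal{S}$ of monomials, $\Delta_e(\mathcal{S})=\{\mu\in\overline{\mathbb{M}}_e:\text{no }\nu\in\mathcal{S}\text{ divides }\mu\}$ and $\Delta^{(\ell)}_e(\mathcal{S})=\Delta_e(\mathcal{S})\cap\overline{\mathbb{M}}^{(\ell)}_e$. Given $\mathcal{S}\subseteq\overline{\mathbb{M}}$, for $\mu=x_0^{i_0}\cdots x_m^{i_m}\in\mathcal{S}$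 set $\phi(\mu)=\mu x_{m-1}/x_m$ if $x_0^{i_0}\cdots x_{m-2}^{i_{m-2}}x_{m-1}^{i_{m-1}+i_m}\notin\mathcal{S}$ and $i_{m-1}+1<q$, and $\phi(\mu)=\mu$ otherwise; $\phi(\mathcal{S})$ is the image. *)

From mathcomp Require Import all_boot.

(* A monomial x_0^{a_0} ... x_m^{a_m} is represented by its exponent vector. *)
Definition mono (m : nat) := {ffun 'I_m.+1 -> nat}.

Definition mdeg (m : nat) (mu : mono m) : nat := \sum_(i < m.+1) mu i.

Definition mdvd (m : nat) (nu mu : mono m) : bool := [forall i, nu i <= mu i].

Definition proj_reduced (q m : nat) (mu : mono m) : bool :=
  [forall i : 'I_m.+1, forall j : 'I_m.+1,
     ((i < j) && (0 < mu j)) ==> (mu i <= q - 1)].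

Definition inMl (q m l : nat) (mu : mono m) : bool :=
  if l == 0 then [forall i : 'I_m.+1, (0 < i) ==> (mu i == 0)]
  else [&& proj_reduced q m mu,
          [forall i : 'I_m.+1, (l < i) ==> (mu i == 0)] &
          [exists i : 'I_m.+1, (nat_of_ord i == l) && (0 < mu i)]].

Definition inDelta (q m e : nat) (S : seq (mono m)) (mu : mono m) : bool :=
  [&& proj_reduced q m mu, mdeg m mu == e & ~~ has (fun nu => mdvd m nu mu) S].

Definition inDeltaL (q m l e : nat) (S : seq (mono m)) (mu : mono m) : bool :=
  inDelta q m e S mu && inMl q m l mu.

(* exponent vectors bounded by e, mapped injectively into monomials; every
   monomial of degree e arises exactly once. *)
Definition of_bounded (m e : nat) (a : {ffun 'I_m.+1 -> 'I_e.+1}) : mono m :=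
  [ffun i => nat_of_ord (a i)].

Definition count_deg (m e : nat) (P : mono m -> bool) : nat :=
  #|[set a : {ffun 'I_m.+1 -> 'I_e.+1} |
      (mdeg m (of_bounded m e a) == e) && P (of_bounded m e a)]|.

Definition idx_m1 (m : nat) : 'I_m.+1 := inord m.-1.
Definition idx_m (m : nat) : 'I_m.+1 := ord_max.

Definition collapse (m : nat) (mu : mono m) : mono m :=
  [ffun i => if i == idx_m1 m then mu (idx_m1 m) + mu (idx_m m)
             else if i == idx_m m then 0 else mu i].

(* mu x_{m-1} / x_m (only used when i_m > 0) *)
Definition shift (m : nat) (mu : mono m) : mono m :=
  [ffun i => if i == idx_m1 m then (mu i).+1
             else if i == idx_m m then (mu i).-1 else mu i].

Definition phi (q m : nat) (S : seq (mono m)) (mu : mono m) : mono m :=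
  if (collapse m mu \notin S) && ((mu (idx_m1 m)).+1 < q) then shift m mu else mu.

Definition phiS (q m : nat) (S : seq (mono m)) : seq (mono m) := map (phi q m S) S.

From mathcomp Require Import all_boot zify.

(* A monomial u counted on the left does not involve x_m, is not divisible by
   any element of S, but is divisible by phi(nu) = nu x_(m-1) / x_m for some nu
   in S; in particular nu_(m-1) + 1 < q. Let c be the least x_(m-1)-exponent of
   an element of S dividing u in the variables x_0, ..., x_(m-2), so c <=
   nu_(m-1) < q - 1. Moving all but c of the x_(m-1)-exponent of u onto x_m
   gives a monomial of the same degree in M^(m), and collapse undoes the move,
   so the map is injective. In large degree the x_(m-1)-exponent of u exceeds q
   plus twice the largest degree of an element of S. Then the new monomial is
   divisible by the element of S realising c, while a divisor phi(s) of it, s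
   in S, would force s_(m-1) < c if phi moves s, and otherwise collapse(s) in
   S, which would divide u. *)

Lemma coord_le_mdeg {m} (u : mono m) i : u i <= mdeg m u.
Proof. by rewrite /mdeg (bigD1 i) //= leq_addr. Qed.

Definition to_bounded (m e : nat) (u : mono m) : {ffun 'I_m.+1 -> 'I_e.+1} :=
  [ffun i => inord (u i)].

Lemma to_boundedK m e (u : mono m) :
  mdeg m u = e -> of_bounded m e (to_bounded m e u) = u.
Proof.
move=> du; apply/ffunP => i; rewrite !ffunE inordK //.
by rewrite ltnS -du coord_le_mdeg.
Qed.

Lemma of_bounded_inj m e : injective (of_bounded m e).
Proof.
move=> a b /ffunP eq_ab; apply/ffunP => i; apply/val_inj.
by have := eq_ab i; rewrite !ffunE.
Qed.

Lemma count_deg_le_inj {m e} {P Q : mono m -> bool} (f : mono m -> mono m) :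
  (forall u, mdeg m u = e -> P u -> mdeg m (f u) = e /\ Q (f u)) ->
  {in [pred u | (mdeg m u == e) && P u] &, injective f} ->
  count_deg m e P <= count_deg m e Q.
Proof.
move=> fPQ f_inj; pose g a := to_bounded m e (f (of_bounded m e a)).
rewrite /count_deg -(card_in_imset (f := g)); last first.
  move=> a b; rewrite !inE => Pa Pb /(congr1 (of_bounded m e)).
  have [da _] := fPQ _ (eqP (andP Pa).1) (andP Pa).2.
  have [db _] := fPQ _ (eqP (andP Pb).1) (andP Pb).2.
  by rewrite !to_boundedK // => /f_inj => /(_ Pa Pb) /of_bounded_inj.
apply/subset_leq_card/subsetP => y /imsetP[a]; rewrite inE => /andP[/eqP da Pa] ->.
by have [dfa Qfa] := fPQ _ da Pa; rewrite inE /g to_boundedK // dfa eqxx.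
Qed.

Section LastTwoVariables.

Variable m : nat.
Hypothesis m_gt0 : 0 < m.

Lemma idx_m1_val : nat_of_ord (idx_m1 m) = m.-1.
Proof. by rewrite /idx_m1 inordK //; lia. Qed.

Lemma prefix_eq_m1 (i : 'I_m.+1) : i < m.-1 -> (i == idx_m1 m) = false.
Proof. by rewrite -val_eqE /= idx_m1_val; lia. Qed.

Lemma prefix_eq_m (i : 'I_m.+1) : i < m.-1 -> (i == idx_m m) = false.
Proof. by rewrite -val_eqE /=; lia. Qed.

Lemma idx_m1_eq_m : (idx_m1 m == idx_m m) = false.
Proof. by rewrite -val_eqE /= idx_m1_val; lia. Qed.

Lemma idx_m_eq_m1 : (idx_m m == idx_m1 m) = false.
Proof. by rewrite eq_sym idx_m1_eq_m. Qed.

Variant coord_spec (i : 'I_m.+1) : 'I_m.+1 -> bool -> bool -> Prop :=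
  | CoordPrefix of i < m.-1 : coord_spec i i false false
  | CoordM1 : coord_spec i (idx_m1 m) true false
  | CoordM : coord_spec i (idx_m m) false true.

Lemma coordP (i : 'I_m.+1) : coord_spec i i (i == idx_m1 m) (i == idx_m m).
Proof.
case: eqP => [-> | /eqP ne1]; first by rewrite idx_m1_eq_m; constructor.
case: eqP => [-> | /eqP ne2]; first by constructor.
constructor; move: ne1 ne2; rewrite -!val_eqE /= idx_m1_val.
by have := ltn_ord i; lia.
Qed.

Lemma mdeg_split (u : mono m) :
  mdeg m u = \sum_(i < m.+1 | i < m.-1) u i + u (idx_m1 m) + u (idx_m m).
Proof.
rewrite /mdeg (bigD1 (idx_m m)) //= (bigD1 (idx_m1 m)) ?idx_m1_eq_m //=.
rewrite addnC [u (idx_m1 m) + _]addnC; congr (_ + _ + _); apply: eq_bigl => i.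
by case: coordP; rewrite ?eqxx ?andbF ?idx_m1_val //=; lia.
Qed.

Lemma mdeg_collapse (u : mono m) : mdeg m (collapse m u) = mdeg m u.
Proof.
rewrite !mdeg_split !ffunE eqxx idx_m_eq_m1 eqxx.
rewrite addn0 addnA; congr (_ + _ + _); apply: eq_bigr => i.
by move=> lt_i; rewrite ffunE prefix_eq_m1 ?prefix_eq_m.
Qed.

Definition split_m1 (c : nat) (u : mono m) : mono m :=
  [ffun i => if i == idx_m1 m then c
             else if i == idx_m m then u (idx_m1 m) - c else u i].

Lemma collapse_split_m1 c (u : mono m) :
  u (idx_m m) = 0 -> c <= u (idx_m1 m) -> collapse m (split_m1 c u) = u.
Proof.
move=> u_m0 c_le; apply/ffunP => i; rewrite !ffunE.
by case: (coordP i); rewrite ?eqxx ?idx_m1_eq_m ?idx_m_eq_m1 ?subnKC.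
Qed.

Lemma mdeg_split_m1 c (u : mono m) :
  u (idx_m m) = 0 -> c <= u (idx_m1 m) -> mdeg m (split_m1 c u) = mdeg m u.
Proof. by move=> u_m0 c_le; rewrite -mdeg_collapse collapse_split_m1. Qed.

Definition mdvd_prefix (r u : mono m) : bool :=
  [forall i : 'I_m.+1, (i < m.-1) ==> (r i <= u i)].

Lemma mdeg_le_prefix_bound {b} {u : mono m} :
  (forall i : 'I_m.+1, i < m.-1 -> u i <= b) ->
  mdeg m u <= m.+1 * b + u (idx_m1 m) + u (idx_m m).
Proof.
move=> u_le; rewrite mdeg_split !leq_add2r.
apply: (@leq_trans (\sum_(i < m.+1 | i < m.-1) b)); first exact: leq_sum.
rewrite sum_nat_const leq_mul2r.
by apply/orP; right; rewrite -[X in _ <= X]card_ord max_card.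
Qed.

Section Phi.

Variables (q : nat) (S : seq (mono m)).

Lemma phi_prefix (s : mono m) (i : 'I_m.+1) : i < m.-1 -> phi q m S s i = s i.
Proof.
move=> lt_i; rewrite /phi; case: ifP => // _.
by rewrite ffunE prefix_eq_m1 ?prefix_eq_m.
Qed.

(* [q] stands for infinity: only values below [q] are ever used. *)
Definition min_exp_m1 (u : mono m) : nat :=
  \big[minn/q]_(r <- S | mdvd_prefix r u) r (idx_m1 m).

Lemma min_exp_m1_le {u r : mono m} :
  r \in S -> mdvd_prefix r u -> min_exp_m1 u <= r (idx_m1 m).
Proof.
move=> + r_u; rewrite /min_exp_m1; elim: S => // s S' IH.
rewrite inE big_cons => /predU1P[<- | /IH le_r]; first by rewrite r_u geq_minl.
by case: ifP => // _; rewrite geq_min le_r orbT.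
Qed.

Lemma min_exp_m1_attained {u : mono m} : min_exp_m1 u < q ->
  exists2 r, r \in S & mdvd_prefix r u && (r (idx_m1 m) == min_exp_m1 u).
Proof.
rewrite /min_exp_m1 big_seq_cond; elim/big_rec: _ => [|r c /andP[rS r_u] IHc].
  by rewrite ltnn.
rewrite /minn; case: (ltnP (r (idx_m1 m)) c) => _; last exact: IHc.
by exists r; rewrite ?r_u ?eqxx.
Qed.

Lemma mdvd_prefix_split_m1 c (r u : mono m) :
  mdvd_prefix r (split_m1 c u) = mdvd_prefix r u.
Proof.
apply: eq_forallb => i; case: (boolP (i < m.-1)) => //= lt_i.
by rewrite ffunE prefix_eq_m1 ?prefix_eq_m.
Qed.

Lemma mdvd_phi_prefix {s v : mono m} : mdvd m (phi q m S s) v -> mdvd_prefix s v.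
Proof.
move=> /forallP s_v; apply/forallP => i; apply/implyP => lt_i.
by rewrite -phi_prefix ?s_v.
Qed.

Lemma inMl_pred_prefix {u : mono m} : proj_reduced q m u -> inMl q m m.-1 u ->
  u (idx_m m) = 0 /\ forall i : 'I_m.+1, i < m.-1 -> u i <= q - 1.
Proof.
move=> /forallP u_red; rewrite /inMl; case: eqP => [m1_0 | _].
  move=> /forallP top0; split=> [|i]; last by rewrite m1_0.
  by apply/eqP/(implyP (top0 (idx_m m))) => /=.
case/and3P=> _ /forallP top0 /existsP[j /andP[/eqP val_j pos_j]]; split.
  by apply/eqP/(implyP (top0 (idx_m m))) => /=; lia.
by move=> i lt_i; apply: (implyP (forallP (u_red i) j)); rewrite val_j lt_i.
Qed.

Lemma min_exp_m1_lt {u : mono m} : ~~ has (fun nu => mdvd m nu u) S ->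
  has (fun nu => mdvd m (phi q m S nu) u) S -> (min_exp_m1 u).+1 < q.
Proof.
move=> uS /hasP[nu nuS nu_u]; have nu_pre := mdvd_phi_prefix nu_u.
move: nu_u; rewrite /phi; case: ifP => [/andP[_ nu_q] _ | _ nu_u].
  by apply: leq_ltn_trans nu_q; rewrite ltnS min_exp_m1_le.
by case/negP: uS; apply/hasP; exists nu.
Qed.

Definition maxdeg : nat := \max_(r <- S) mdeg m r.

Lemma coord_le_maxdeg {r : mono m} i : r \in S -> r i <= maxdeg.
Proof. by move=> rS; rewrite (leq_trans (coord_le_mdeg r i)) // (leq_bigmax_seq r). Qed.

Definition push_to_m (u : mono m) : mono m := split_m1 (min_exp_m1 u) u.

Section PushToM.

Variable u : mono m.
Hypothesis u_prefix : forall i : 'I_m.+1, i < m.-1 -> u i <= q - 1.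
Hypothesis uS : ~~ has (fun nu => mdvd m nu u) S.
Hypothesis c_lt : (min_exp_m1 u).+1 < q.
Hypothesis u_large : q + 2 * maxdeg <= u (idx_m1 m).

Lemma proj_reduced_push : proj_reduced q m (push_to_m u).
Proof.
apply/forallP => i; apply/forallP => j; apply/implyP => /andP[+ _]; rewrite ffunE.
case: (coordP i) => [lt_i _ | _ | ] /=; [exact: u_prefix | lia | ].
by have := ltn_ord j; rewrite /=; lia.
Qed.

Lemma inMl_push : inMl q m m (push_to_m u).
Proof.
rewrite /inMl (_ : (m == 0) = false); last by lia.
rewrite proj_reduced_push /=; apply/andP; split.
  by apply/forallP => i; apply/implyP; have := ltn_ord i; lia.
by apply/existsP; exists (idx_m m); rewrite /= eqxx ffunE idx_m_eq_m1 eqxx; lia.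
Qed.

Lemma has_mdvd_push : has (fun nu => mdvd m nu (push_to_m u)) S.
Proof.
have [rho rhoS /andP[rho_u /eqP rho_c]] := min_exp_m1_attained (ltnW c_lt).
apply/hasP; exists rho => //; apply/forallP => i; rewrite ffunE.
case: (coordP i) => [lt_i | | ] /=; first exact: (implyP (forallP rho_u i) lt_i).
  by rewrite rho_c.
by have := coord_le_maxdeg (idx_m m) rhoS; lia.
Qed.

Lemma hasN_mdvd_push_phiS : ~~ has (fun nu => mdvd m nu (push_to_m u)) (phiS q m S).
Proof.
apply/hasP => -[_ /mapP[s sS ->] s_push].
have s_pre : mdvd_prefix s u.
  by rewrite -(mdvd_prefix_split_m1 (min_exp_m1 u)); apply: mdvd_phi_prefix.
have c_s := min_exp_m1_le sS s_pre.
move/forallP: s_push => /(_ (idx_m1 m)); rewrite [push_to_m u _]ffunE eqxx /phi.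
case: ifP => [_ | phi_id s_c]; first by rewrite ffunE eqxx; lia.
have col_S : collapse m s \in S.
  have s_q : (s (idx_m1 m)).+1 < q by apply: leq_ltn_trans c_lt.
  by move: phi_id; rewrite s_q andbT => /negbFE.
case/negP: uS; apply/hasP; exists (collapse m s) => //.
apply/forallP => i; rewrite ffunE.
case: (coordP i) => [lt_i | | ] //=; first exact: (implyP (forallP s_pre i) lt_i).
by have := coord_le_maxdeg (idx_m1 m) sS; have := coord_le_maxdeg (idx_m m) sS; lia.
Qed.

End PushToM.

Lemma push_to_m_diff {e} {u : mono m} : m.+1 * q + q + 2 * maxdeg <= e ->
  inDeltaL q m m.-1 e S u && ~~ inDeltaL q m m.-1 e (phiS q m S) u ->
  [/\ mdeg m (push_to_m u) = e,
      inDeltaL q m m e (phiS q m S) (push_to_m u) && ~~ inDeltaL q m m e S (push_to_m u)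
    & collapse m (push_to_m u) = u].
Proof.
move=> le_e /andP[/andP[/and3P[u_red /eqP du uS] u_Ml]].
rewrite /inDeltaL /inDelta u_red du eqxx u_Ml andbT /= negbK /phiS has_map => u_phi.
have [u_m0 u_prefix] := inMl_pred_prefix u_red u_Ml.
have c_lt := min_exp_m1_lt uS u_phi.
have u_large : q + 2 * maxdeg <= u (idx_m1 m).
  have := mdeg_le_prefix_bound u_prefix; rewrite du u_m0; lia.
have c_le : min_exp_m1 u <= u (idx_m1 m) by lia.
have d_push : mdeg m (push_to_m u) = e by rewrite mdeg_split_m1.
split; [done | | exact: collapse_split_m1].
rewrite /inDeltaL /inDelta proj_reduced_push // has_mdvd_push // inMl_push //.
by rewrite hasN_mdvd_push_phiS // d_push eqxx.
Qed.

End Phi.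

End LastTwoVariables.

Theorem proposition4p10 (q m : nat)
  (hq : exists p k, [/\ prime p, 0 < k & q = p ^ k]) (hm : 0 < m)
  (S : seq (mono m)) (hS : all (proj_reduced q m) S) :
  exists e0 : nat, forall e : nat, e0 <= e ->
    count_deg m e (fun mu => inDeltaL q m m.-1 e S mu
                             && ~~ inDeltaL q m m.-1 e (phiS q m S) mu)
    <= count_deg m e (fun mu => inDeltaL q m m e (phiS q m S) mu
                                && ~~ inDeltaL q m m e S mu).
Proof.
exists (m.+1 * q + q + 2 * maxdeg m S) => e le_e.
have push_diff := push_to_m_diff m hm q S le_e.
apply: (count_deg_le_inj (push_to_m m q S)) => [u _ /push_diff[] // | ].
by apply: (can_in_inj (g := collapse m)) => u /andP[_ /push_diff[]].
Qed.
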